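(* In the setting described in the context, for every node $p\in\mathcal{V}_h^C\cup\mathcal{M}_h^C$ with $u^h_1(p)\neq0$ (a non actual contact node), $$\langle\lambda^h,\phi_pe_1\rangle_h=0.$$
   Context: Let $\Omega\subset\mathbb{R}^2$ be a bounded polygonal Lipschitz domain with boundary partitioned into relatively open, pairwise disjoint parts $\Gamma_D,\Gamma_N,\Gamma_C$, $\mathrm{meas}(\Gamma_D)>0$, $\overline{\Gamma_C}\subset\partial\Omega\setminus\overline{\Gamma_D}$, outward unit normal on $\Gamma_C$ equal to $e_1=(1,0)$. Let $\sigma(v)=\chi\,\mathrm{tr}(\epsilon(v))I+2\mu\epsilon(v)$ ($\chi,\mu>0$, $\epsilon(v)=\frac12(\nabla v+\nabla v^T)$), $a(w,v)=\int_\Omega\sigma(w):\epsilon(v)\,dx$, $L(v)=\int_\Omega f\cdot v\,dx+\int_{\Gamma_N}g\cdot v\,ds$, $f\in[L^2(\Omega)]^2$, $g\in[L^2(\Gamma_N)]^2$. Let $\mathcal{T}_h$ be a regular triangulation of $\Omega$ (each of $\Gamma_D,\Gamma_N,\Gamma_C$ a union of mesh edges); $\mathcal{V}_h,\mathcal{M}_h$ vertices and edge midpoints; $\mathcal{V}_h^C$ vertices in $\overline{\Gamma_C}$, $\mathcal{M}_h^C$ midpoints of edges on $\Gamma_C$; $\mathcal{V}_h^D,\mathcal{M}_h^D$ analogously for $\Gamma_D$; $\mathcal{V}_h^o=\mathcal{V}_h\setminus\mathcal{V}_h^D$, $\mathcal{M}_h^o=\mathcal{M}_h\setminus\mathcal{M}_h^D$.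 $V^h=\{v\in[C(\overline\Omega)]^2: v|_T\in[P_2(T)]^2,\ v=0\text{ on }\Gamma_D\}$ with scalar quadratic Lagrange basis $\psi_z$, $z\in\mathcal{V}_h^o\cup\mathcal{M}_h^o$. $\mathcal{K}^h=\{v^h=(v^h_1,v^h_2)\in V^h: v^h_1(z)\le0\ \forall z\in\mathcal{V}_h^C\cup\mathcal{M}_h^C\}$; $u^h=(u^h_1,u^h_2)\in\mathcal{K}^h$ solves $a(u^h,v^h-u^h)\ge L(v^h-u^h)$ $\forall v^h\in\mathcal{K}^h$. $Q^h$ = continuous $\mathbb{R}^2$-valued functions on $\overline{\Gamma_C}$ affine on each half of each contact edge (edges split at midpoints), scalar nodal basis $\phi_z$, $z\in\mathcal{V}_h^C\cup\mathcal{M}_h^C$. $\omega_z$ = union of elements sharing $z$, $\gamma_{z,C}=\partial\omega_z\cap\Gamma_C$. $\pi_h v=\sum_{z\in\mathcal{V}_h^C\cup\mathcal{M}_h^C}\sum_iv_i(z)\psi_ze_i$; $\langle w,v\rangle_h=\sum_{z\in\mathcal{V}_h^C\cup\mathcal{M}_h^C}w(z)\cdot v(z)\int_{\gamma_{z,C}}\phi_z\,ds$; $\lambda^h\in Q^h$ defined by $\langle\lambda^h,v^h\rangle_h=L(\pi_hv^h)-a(u^h,\pi_hv^h)$ for all $v^h\in Q^h$. *)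

From HB Require Import structures.
From mathcomp Require Import all_boot all_order all_algebra.
From mathcomp Require Import all_classical all_reals all_analysis.
Set Implicit Arguments. Unset Strict Implicit. Unset Printing Implicit Defensive.
Import Order.TTheory GRing.Theory Num.Theory.
Import numFieldNormedType.Exports.
Local Open Scope classical_set_scope.
Local Open Scope ring_scope.

Section FEM.
Variable R : realType.
Notation pt := (R * R)%type.

Definition vadd (x y : pt) : pt := (x.1 + y.1, x.2 + y.2).
Definition vsub (x y : pt) : pt := (x.1 - y.1, x.2 - y.2).
Definition vscale (t : R) (x : pt) : pt := (t * x.1, t * x.2).
Definition vdot (x y : pt) : R := x.1 * y.1 + x.2 * y.2.
Definition e1 : pt := (1, 0).
Definition e2 : pt := (0, 1).

Definition triangle := (pt * pt * pt)%type.
Definition tv1 (t : triangle) : pt := t.1.1.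
Definition tv2 (t : triangle) : pt := t.1.2.
Definition tv3 (t : triangle) : pt := t.2.
Definition tverts (t : triangle) : seq pt := [:: tv1 t; tv2 t; tv3 t].

Definition nondegenerate (t : triangle) : Prop :=
  let u := vsub (tv2 t) (tv1 t) in let w := vsub (tv3 t) (tv1 t) in
  u.1 * w.2 - u.2 * w.1 != 0.

Definition ctri (t : triangle) : set pt :=
  [set x | exists l1 l2 l3 : R, [/\ 0 <= l1, 0 <= l2, 0 <= l3, l1 + l2 + l3 = 1 &
     x = vadd (vscale l1 (tv1 t)) (vadd (vscale l2 (tv2 t)) (vscale l3 (tv3 t)))]].

Definition edge := (pt * pt)%type.
Definition seg (e : edge) (s : R) : pt := vadd e.1 (vscale s (vsub e.2 e.1)).
Definition csegm (e : edge) : set pt := [set x | exists2 s, 0 <= s <= 1 & x = seg e s].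
Definition elen (e : edge) : R := Num.sqrt (vdot (vsub e.2 e.1) (vsub e.2 e.1)).
Definition midpoint (e : edge) : pt := seg e (2^-1).

Definition tedges (t : triangle) : seq edge :=
  [:: (tv1 t, tv2 t); (tv2 t, tv3 t); (tv3 t, tv1 t)].

Definition mesh := seq triangle.

Definition has_vertex (t : triangle) (z : pt) : bool := z \in tverts t.

Definition is_mesh_edge (T : mesh) (e : edge) : Prop :=
  exists2 t, t \in T & ((e \in tedges t) \/ ((e.2, e.1) \in tedges t)).

(* boundary edges: edges belonging to exactly one element *)
Definition bedges (T : mesh) : seq edge :=
  flatten [seq [seq e <- tedges t |
      ~~ has (fun t' => (t' != t) && has_vertex t' e.1 && has_vertex t' e.2) T]
    | t <- T].

Definition regular_triangulation (T : mesh) : Prop :=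
  uniq T /\ (forall t, t \in T -> nondegenerate t) /\
  (forall t t', t \in T -> t' \in T -> t != t' ->
     [\/ ctri t `&` ctri t' = set0,
         exists2 v, (v \in tverts t) && (v \in tverts t') & ctri t `&` ctri t' = [set v]
       | exists v w, [/\ v != w, (v \in tverts t) && (v \in tverts t'),
                         (w \in tverts t) && (w \in tverts t') &
                         ctri t `&` ctri t' = csegm (v, w)]]).

Definition mesh_union (T : mesh) : set pt := \bigcup_(t in [set` T]) ctri t.
Definition Omega (T : mesh) : set pt := interior (mesh_union T).
Definition bdry (A : set pt) : set pt := closure A `\` interior A.

Definition lipschitz_fun (g : R -> R) : Prop :=
  exists K : R, forall a b, `|g a - g b| <= K * `|a - b|.

(* locally (near every boundary point) the domain lies below the graph of a
   Lipschitz function, in a rotated Cartesian frame *)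
Definition lipschitz_domain (O : set pt) : Prop :=
  forall x, bdry O x ->
  exists (r c s : R) (g : R -> R), [/\ 0 < r, c ^+ 2 + s ^+ 2 = 1, lipschitz_fun g &
    forall y, vdot (vsub y x) (vsub y x) < r ^+ 2 ->
      (O y <-> (s * y.1 + c * y.2) < g (c * y.1 - s * y.2))].

Definition rel_open (B A : set pt) : Prop := exists2 U, open U & A = U `&` B.

Definition union_of_edges (T : mesh) (A : set pt) : Prop :=
  exists E : seq edge, (forall e, e \in E -> is_mesh_edge T e /\ csegm e `<=` bdry (Omega T))
    /\ closure A = \bigcup_(e in [set` E]) csegm e.

Definition vertices (T : mesh) : seq pt := undup (flatten [seq tverts t | t <- T]).
Definition midpoints (T : mesh) : seq pt :=
  undup (flatten [seq [seq midpoint e | e <- tedges t] | t <- T]).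
Definition is_node (T : mesh) (z : pt) : bool := (z \in vertices T) || (z \in midpoints T).

Definition VhC (T : mesh) (GC : set pt) : seq pt :=
  [seq z <- vertices T | `[< closure GC z >]].
Definition MhC (T : mesh) (GC : set pt) : seq pt :=
  [seq midpoint e | e <- bedges T & `[< csegm e `<=` closure GC >]].
Definition cnodes (T : mesh) (GC : set pt) : seq pt := undup (VhC T GC ++ MhC T GC).

Definition P2_on (A : set pt) (v : pt -> R) : Prop :=
  exists c0 c1 c2 c3 c4 c5 : R, forall x, A x ->
    v x = c0 + c1 * x.1 + c2 * x.2 + c3 * x.1 ^+ 2 + c4 * (x.1 * x.2) + c5 * x.2 ^+ 2.

Definition scalar_P2 (T : mesh) (v : pt -> R) : Prop :=
  {within closure (Omega T), continuous v} /\ (forall t, t \in T -> P2_on (ctri t) v).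

Definition Vh (T : mesh) (GD : set pt) (v : pt -> pt) : Prop :=
  scalar_P2 T (fun x => (v x).1) /\ scalar_P2 T (fun x => (v x).2) /\
  (forall x, GD x -> v x = (0, 0)).

Definition Kh (T : mesh) (GD GC : set pt) (v : pt -> pt) : Prop :=
  Vh T GD v /\ (forall z, z \in cnodes T GC -> (v z).1 <= 0).

Definition lagrange_basis (T : mesh) (z : pt) (psiz : pt -> R) : Prop :=
  scalar_P2 T psiz /\
  (forall z', is_node T z' -> psiz z' = if z' == z then 1 else 0).

Definition affine_on_seg (e : edge) (w : pt -> R) : Prop :=
  exists c d : R, forall s, 0 <= s <= 1 -> w (seg e s) = c + s * d.

Definition contact_edges (T : mesh) (GC : set pt) : seq edge :=
  [seq e <- bedges T | `[< csegm e `<=` closure GC >]].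
Definition half_edges (T : mesh) (GC : set pt) : seq edge :=
  flatten [seq [:: (e.1, midpoint e); (midpoint e, e.2)] | e <- contact_edges T GC].

Definition scalar_Q (T : mesh) (GC : set pt) (w : pt -> R) : Prop :=
  {within closure GC, continuous w} /\
  (forall e, e \in half_edges T GC -> affine_on_seg e w).

Definition Qh (T : mesh) (GC : set pt) (w : pt -> pt) : Prop :=
  scalar_Q T GC (fun x => (w x).1) /\ scalar_Q T GC (fun x => (w x).2).

Definition Q_basis (T : mesh) (GC : set pt) (z : pt) (phiz : pt -> R) : Prop :=
  scalar_Q T GC phiz /\
  (forall z', z' \in cnodes T GC -> phiz z' = if z' == z then 1 else 0).

Definition leb2 := ((@lebesgue_measure R) \x (@lebesgue_measure R))%E.

Definition area_int (A : set pt) (F : pt -> R) : R := \int[leb2]_(x in A) F x.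

Definition line_int (T : mesh) (S : set pt) (F : pt -> R) : R :=
  \sum_(e <- bedges T)
     elen e * (\int[@lebesgue_measure R]_(s in [set s | 0 <= s <= 1 /\ S (seg e s)])
                 F (seg e s)).

Definition pd (v : pt -> R) (j : pt) (x : pt) : R := derive v x j.

(* sigma(w) : eps(v) *)
Definition sig_eps (chi mu : R) (w v : pt -> pt) (x : pt) : R :=
  let w11 := pd (fun y => (w y).1) e1 x in
  let w22 := pd (fun y => (w y).2) e2 x in
  let w12 := (pd (fun y => (w y).1) e2 x + pd (fun y => (w y).2) e1 x) / 2 in
  let v11 := pd (fun y => (v y).1) e1 x in
  let v22 := pd (fun y => (v y).2) e2 x in
  let v12 := (pd (fun y => (v y).1) e2 x + pd (fun y => (v y).2) e1 x) / 2 in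
  chi * (w11 + w22) * (v11 + v22) + 2 * mu * (w11 * v11 + w22 * v22 + 2 * (w12 * v12)).

Definition bil_a (T : mesh) (chi mu : R) (w v : pt -> pt) : R :=
  area_int (Omega T) (sig_eps chi mu w v).

Definition lin_L (T : mesh) (GN : set pt) (f g : pt -> pt) (v : pt -> pt) : R :=
  area_int (Omega T) (fun x => vdot (f x) (v x)) + line_int T GN (fun x => vdot (g x) (v x)).

Definition L2_dom (A : set pt) (f : pt -> pt) : Prop :=
  measurable_fun A (fun x => (f x).1) /\ measurable_fun A (fun x => (f x).2) /\
  (\int[leb2]_(x in A) ((vdot (f x) (f x))%:E) < +oo)%E.

Definition L2_bdry (T : mesh) (S : set pt) (g : pt -> pt) : Prop :=
  forall e, e \in bedges T ->
    let D := [set s : R | 0 <= s <= 1 /\ S (seg e s)] in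
    measurable_fun D (fun s => (g (seg e s)).1) /\
    measurable_fun D (fun s => (g (seg e s)).2) /\
    (\int[@lebesgue_measure R]_(s in D) ((vdot (g (seg e s)) (g (seg e s)))%:E) < +oo)%E.

Definition omega_z (T : mesh) (z : pt) : set pt :=
  \bigcup_(t in [set t | t \in T /\ ctri t z]) ctri t.
Definition gamma_zC (T : mesh) (GC : set pt) (z : pt) : set pt :=
  bdry (omega_z T z) `&` GC.

Definition disc_pair (T : mesh) (GC : set pt) (phi : pt -> pt -> R) (w v : pt -> pt) : R :=
  \sum_(z <- cnodes T GC) vdot (w z) (v z) * line_int T (gamma_zC T GC z) (phi z).

Definition pi_h (T : mesh) (GC : set pt) (psi : pt -> pt -> R) (v : pt -> pt) : pt -> pt :=
  fun x => (\sum_(z <- cnodes T GC) (v z).1 * psi z x,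
            \sum_(z <- cnodes T GC) (v z).2 * psi z x).

End FEM.

From HB Require Import structures.
From mathcomp Require Import all_boot all_order all_algebra.
From mathcomp Require Import all_classical all_reals all_analysis.
From mathcomp Require Import ring lra.
Import Order.TTheory GRing.Theory Num.Theory.
Import numFieldNormedType.Exports.
Local Open Scope classical_set_scope.
Local Open Scope ring_scope.
Set Implicit Arguments. Unset Strict Implicit.

(* Write c := -u^h_1(p) > 0 and X := <lambda^h, phi_p e1>_h.  For |k| <= c the
   field u^h + k psi_p e1 is still admissible: psi_p vanishes at all other
   contact nodes, and on Gamma_D because it is quadratic on each Dirichlet edge
   and zero at that edge's three nodes, none of which is p.  Testing the
   variational inequality with it, and the definition of lambda^h with
   k phi_p e1 (whose interpolant pi_h is k psi_p e1), gives k X <= 0 for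
   k = c and k = -c, hence X = 0. *)

Lemma pair_ext (A B : Type) (x y : A * B) : x.1 = y.1 -> x.2 = y.2 -> x = y.
Proof. by case: x; case: y => ? ? ? ? /= -> ->. Qed.

Section WithinContinuous.
Variables (T : topologicalType) (R : numFieldType) (A : set T).

Lemma within_continuous_cst (k : R) : {within A, continuous (fun _ : T => k)}.
Proof. by apply: continuous_subspaceT => x; exact: cvg_cst. Qed.

Lemma within_continuousD (f g : T -> R) :
  {within A, continuous f} -> {within A, continuous g} ->
  {within A, continuous (fun x => f x + g x)}.
Proof.
move=> /subspace_continuousP hf /subspace_continuousP hg.
by apply/subspace_continuousP => x Ax; apply: cvgD; [exact: hf | exact: hg].
Qed.

Lemma within_continuousZ (k : R) (g : T -> R) :
  {within A, continuous g} -> {within A, continuous (fun x => k * g x)}.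
Proof.
move=> /subspace_continuousP hg; apply/subspace_continuousP => x Ax.
by apply: cvgM; [exact: cvg_cst | exact: hg].
Qed.

End WithinContinuous.

Section Geometry.
Variable R : realType.
Implicit Types (t : triangle R) (T : mesh R) (e : edge R).

Lemma seg0 e : seg e 0 = e.1.
Proof. by apply: pair_ext => /=; ring. Qed.

Lemma seg1 e : seg e 1 = e.2.
Proof. by apply: pair_ext => /=; ring. Qed.

Lemma midpoint_rev e : midpoint (e.2, e.1) = midpoint e.
Proof. by apply: pair_ext; rewrite /midpoint /seg /vadd /vscale /vsub /=; field. Qed.

Lemma ctri_vertex t v : v \in tverts t -> ctri t v.
Proof.
rewrite !inE => /or3P [] /eqP ->; [exists 1, 0, 0 | exists 0, 1, 0 | exists 0, 0, 1];
  by split; rewrite ?ler01 ?lexx //; [lra | apply: pair_ext => /=; ring].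
Qed.

Lemma ctri_seg t a b s :
  ctri t a -> ctri t b -> 0 <= s <= 1 -> ctri t (seg (a, b) s).
Proof.
move=> [a1 [a2 [a3 [h1 h2 h3 hs ->]]]] [b1 [b2 [b3 [g1 g2 g3 gs ->]]]] /andP[s0 s1].
exists ((1 - s) * a1 + s * b1), ((1 - s) * a2 + s * b2), ((1 - s) * a3 + s * b3).
split; try by apply: addr_ge0; apply: mulr_ge0 => //; lra.
- have -> : (1 - s) * a1 + s * b1 + ((1 - s) * a2 + s * b2) + ((1 - s) * a3 + s * b3)
    = (1 - s) * (a1 + a2 + a3) + s * (b1 + b2 + b3) by ring.
  by rewrite hs gs; ring.
- by rewrite /seg /vadd /vscale /vsub /=; apply: pair_ext => /=; ring.
Qed.

Lemma tedges_tverts t e : e \in tedges t -> (e.1 \in tverts t) && (e.2 \in tverts t).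
Proof. by rewrite !inE => /or3P [] /eqP -> /=; rewrite !eqxx ?orbT. Qed.

Lemma mem_vertices T t v : t \in T -> v \in tverts t -> v \in vertices T.
Proof.
move=> tT vt; rewrite /vertices mem_undup; apply/flattenP.
by exists (tverts t) => //; apply: map_f.
Qed.

Lemma mem_midpoints T t e : t \in T -> e \in tedges t -> midpoint e \in midpoints T.
Proof.
move=> tT et; rewrite /midpoints mem_undup; apply/flattenP.
by exists [seq midpoint e | e <- tedges t]; [apply/mapP; exists t | exact: map_f].
Qed.

Lemma bedges_tedges T e : e \in bedges T -> exists2 t, t \in T & e \in tedges t.
Proof.
rewrite /bedges => /flattenP [s /mapP [t tT ->]].
by rewrite mem_filter => /andP [_ et]; exists t.
Qed.

Lemma cnodes_is_node T GC z : z \in cnodes T GC -> is_node T z.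
Proof.
rewrite /cnodes mem_undup mem_cat => /orP [].
  by rewrite /VhC mem_filter => /andP [_ zv]; rewrite /is_node zv.
move=> /mapP [e]; rewrite mem_filter => /andP [_ /bedges_tedges [t tT et]] ->.
by rewrite /is_node (mem_midpoints tT et) orbT.
Qed.

Lemma cnodes_closure T GC z : z \in cnodes T GC -> closure GC z.
Proof.
rewrite /cnodes mem_undup mem_cat => /orP [].
  by rewrite /VhC mem_filter => /andP [/asboolP].
move=> /mapP [e]; rewrite mem_filter => /andP [/asboolP h _] ->.
by apply: h; exists 2^-1 => //; apply/andP; split; lra.
Qed.

End Geometry.

Section Quadratics.
Variable R : realType.

Lemma quadratic_eq0 (a b c : R) :
  a + b * 0 + c * 0 ^+ 2 = 0 -> a + b * 1 + c * 1 ^+ 2 = 0 ->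
  a + b * 2^-1 + c * (2^-1) ^+ 2 = 0 -> forall s, a + b * s + c * s ^+ 2 = 0.
Proof.
rewrite !expr2 => h0 h1 h2 s.
have -> : a = 0 by lra.
have -> : c = 0 by lra.
have -> : b = 0 by lra.
by ring.
Qed.

Lemma P2_on_lin (A : set (R * R)) (v w : R * R -> R) (k : R) :
  P2_on A v -> P2_on A w -> P2_on A (fun x => v x + k * w x).
Proof.
move=> [a0 [a1 [a2 [a3 [a4 [a5 hv]]]]]] [b0 [b1 [b2 [b3 [b4 [b5 hw]]]]]].
exists (a0 + k * b0), (a1 + k * b1), (a2 + k * b2), (a3 + k * b3), (a4 + k * b4),
  (a5 + k * b5).
by move=> x Ax; rewrite hv // hw //; ring.
Qed.

(* The restriction of a quadratic to a segment is a quadratic in the parameter. *)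
Lemma P2_on_seg_eq0 (A : set (R * R)) (v : R * R -> R) (e : edge R) :
  P2_on A v -> (forall s, 0 <= s <= 1 -> A (seg e s)) ->
  v e.1 = 0 -> v e.2 = 0 -> v (midpoint e) = 0 ->
  forall s, 0 <= s <= 1 -> v (seg e s) = 0.
Proof.
case: e => [[a1 a2] [b1 b2]] /= [c0 [c1 [c2 [c3 [c4 [c5 hv]]]]]] hA h0 h1 hm.
set e := ((a1, a2), (b1, b2)); set dx := b1 - a1; set dy := b2 - a2.
have on_seg s : 0 <= s <= 1 -> v (seg e s) =
   (c0 + c1 * a1 + c2 * a2 + c3 * a1 ^+ 2 + c4 * (a1 * a2) + c5 * a2 ^+ 2)
 + (c1 * dx + c2 * dy + 2 * c3 * a1 * dx + c4 * (a1 * dy + a2 * dx) + 2 * c5 * a2 * dy) * s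
 + (c3 * dx ^+ 2 + c4 * dx * dy + c5 * dy ^+ 2) * s ^+ 2.
  move=> hs; rewrite hv; last exact: hA.
  by rewrite /seg /vadd /vscale /vsub /= /dx /dy; ring.
move=> s hs; rewrite on_seg //; apply: quadratic_eq0.
- by rewrite -on_seg ?(seg0 e) //; lra.
- by rewrite -on_seg ?(seg1 e) //; lra.
- by rewrite -on_seg //; lra.
Qed.

End Quadratics.

Section DiscreteSpaces.
Variables (R : realType) (T : mesh R) (GD GC : set (R * R)).

Lemma lagrange_basis_eq0_on_GD (psiz : R * R -> R) p :
  union_of_edges T GD -> closure GC `<=` bdry (Omega T) `\` closure GD ->
  closure GC p -> lagrange_basis T p psiz -> forall x, GD x -> psiz x = 0.
Proof.
move=> [E [HE clGD]] GC_GD GCp [[_ psiP2] psi_nodes] x GDx.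
have : closure GD x by apply: subset_closure.
rewrite clGD => -[e eE [s hs ->]].
have [[t tT e_t] _] := HE e eE.
have /andP [v1 v2] : (e.1 \in tverts t) && (e.2 \in tverts t).
  by case: e_t => /tedges_tverts /andP [] //= -> ->.
have mid : midpoint e \in midpoints T.
  case: e_t => h; first exact: mem_midpoints tT h.
  by rewrite -midpoint_rev; exact: mem_midpoints tT h.
have onGD s' : 0 <= s' <= 1 -> closure GD (seg e s').
  by move=> hs'; rewrite clGD; exists e => //; exists s'.
have neq_p y : closure GD y -> y != p.
  by move=> hy; apply/eqP => yp; have := GC_GD _ GCp; rewrite -yp => -[_].
have psi0 y : is_node T y -> closure GD y -> psiz y = 0.
  by move=> ny hy; rewrite psi_nodes // ifN // neq_p.
apply: (P2_on_seg_eq0 (psiP2 t tT)) => //.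
- move: v1 v2; case: (e) => a b /= va vb s' hs'.
  exact: ctri_seg (ctri_vertex va) (ctri_vertex vb) hs'.
- by apply: psi0; [rewrite /is_node (mem_vertices tT v1) | rewrite -seg0; apply: onGD; lra].
- by apply: psi0; [rewrite /is_node (mem_vertices tT v2) | rewrite -seg1; apply: onGD; lra].
- by apply: psi0; [rewrite /is_node mid orbT | apply: onGD; lra].
Qed.

Lemma Kh_perturb (uh : R * R -> R * R) (psiz : R * R -> R) p k :
  union_of_edges T GD -> closure GC `<=` bdry (Omega T) `\` closure GD ->
  p \in cnodes T GC -> lagrange_basis T p psiz ->
  Kh T GD GC uh -> k <= - (uh p).1 ->
  Kh T GD GC (fun x => ((uh x).1 + k * psiz x, (uh x).2)).
Proof.
move=> HGD GC_GD pC psi_basis [[[cont1 P1] [V2 uD]] u_cnodes] hk.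
have psiGD := lagrange_basis_eq0_on_GD HGD GC_GD (cnodes_closure pC) psi_basis.
case: psi_basis => [[contpsi P2psi] psi_nodes].
split; [split; [split|split] |] => //.
- by apply: within_continuousD => //; exact: within_continuousZ.
- by move=> t tT; apply: P2_on_lin; [exact: P1 | exact: P2psi].
- by move=> x GDx; rewrite uD // psiGD //=; apply: pair_ext => /=; ring.
- move=> z zC /=; rewrite psi_nodes; last exact: cnodes_is_node zC.
  by case: eqP => [->|_]; [lra | rewrite mulr0 addr0; exact: u_cnodes].
Qed.

Lemma Qh_scale_e1 (w : R * R -> R) k :
  scalar_Q T GC w -> Qh T GC (fun x => (k * w x, 0)).
Proof.
move=> [contw affw]; split; split.
- exact: within_continuousZ.
- move=> e he; have [a [b hab]] := affw e he.
  by exists (k * a), (k * b) => s hs /=; rewrite hab //; ring.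
- exact: within_continuous_cst.
- by move=> e he; exists 0, 0 => s hs /=; ring.
Qed.

Lemma pi_h_Q_basis (psi : R * R -> R * R -> R) (phip : R * R -> R) p k :
  p \in cnodes T GC -> Q_basis T GC p phip ->
  pi_h T GC psi (fun x => (k * phip x, 0)) = (fun x => (k * psi p x, 0)).
Proof.
move=> pC [_ phi_nodes]; apply: boolp.funext => x; apply: pair_ext; rewrite /pi_h /=.
- rewrite (bigD1_seq p) ?undup_uniq //= phi_nodes // eqxx mulr1.
  rewrite big1_seq ?addr0 // => z /andP [zp zC].
  by rewrite phi_nodes // (negbTE zp) mulr0 mul0r.
- by rewrite big1 // => z _; rewrite mul0r.
Qed.

Lemma disc_pair_scale_e1 (phi : R * R -> R * R -> R) (lam : R * R -> R * R)
    (w : R * R -> R) k :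
  disc_pair T GC phi lam (fun x => (k * w x, 0))
  = k * disc_pair T GC phi lam (fun x => (w x, 0)).
Proof.
rewrite /disc_pair mulr_sumr; apply: eq_bigr => z _.
by rewrite /vdot /=; ring.
Qed.

End DiscreteSpaces.

Theorem lemma4p3 (R : realType) (T : mesh R) (GD GN GC : set (R * R))
  (chi mu : R) (f g : R * R -> R * R)
  (uh : R * R -> R * R) (psi phi : R * R -> R * R -> R) (lam : R * R -> R * R)
  (p : R * R) :
  (* Omega: bounded polygonal Lipschitz domain triangulated by T *)
  regular_triangulation T ->
  connected (Omega T) ->
  closure (Omega T) = mesh_union T ->
  lipschitz_domain (Omega T) ->
  (* boundary partition *)
  rel_open (bdry (Omega T)) GD -> rel_open (bdry (Omega T)) GN ->
  rel_open (bdry (Omega T)) GC ->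
  GD `&` GN = set0 -> GD `&` GC = set0 -> GN `&` GC = set0 ->
  bdry (Omega T) = closure GD `|` closure GN `|` closure GC ->
  union_of_edges T GD -> union_of_edges T GN -> union_of_edges T GC ->
  GD !=set0 ->
  closure GC `<=` bdry (Omega T) `\` closure GD ->
  (* outward unit normal on Gamma_C equals e1 *)
  (forall e t, e \in bedges T -> csegm e `<=` closure GC -> t \in T ->
     has_vertex t e.1 -> has_vertex t e.2 ->
     e.1.1 = e.2.1 /\ (forall v, v \in tverts t -> v.1 <= e.1.1)) ->
  (* material parameters and data *)
  0 < chi -> 0 < mu ->
  L2_dom (Omega T) f -> L2_bdry T GN g ->
  (* discrete contact problem *)
  Kh T GD GC uh ->
  (forall vh, Kh T GD GC vh ->
     bil_a T chi mu uh (fun x => vsub (vh x) (uh x))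
       >= lin_L T GN f g (fun x => vsub (vh x) (uh x))) ->
  (* Lagrange bases psi_z of V^h and phi_z of Q^h at the contact nodes *)
  (forall z, z \in cnodes T GC -> lagrange_basis T z (psi z)) ->
  (forall z, z \in cnodes T GC -> Q_basis T GC z (phi z)) ->
  (* the discrete multiplier lambda^h *)
  Qh T GC lam ->
  (forall vh, Qh T GC vh ->
     disc_pair T GC phi lam vh
       = lin_L T GN f g (pi_h T GC psi vh) - bil_a T chi mu uh (pi_h T GC psi vh)) ->
  (* a non actual contact node *)
  p \in cnodes T GC -> (uh p).1 != 0 ->
  disc_pair T GC phi lam (fun x => (phi p x, 0)) = 0.
Proof.
move=> _ _ _ _ _ _ _ _ _ _ _ HGD _ _ _ GC_GD _ _ _ _ _ Kuh VI psi_basis phi_basis _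
  lam_def pC up0.
have up_lt0 : (uh p).1 < 0 by rewrite lt_neqAle up0 Kuh.2.
set X := disc_pair T GC phi lam (fun x => (phi p x, 0)).
have scaled_le0 k : k <= - (uh p).1 -> k * X <= 0.
  move=> hk.
  have := VI _ (Kh_perturb HGD GC_GD pC (psi_basis p pC) Kuh hk).
  have -> : (fun x => vsub ((uh x).1 + k * psi p x, (uh x).2) (uh x))
            = (fun x => (k * psi p x, 0)).
    by apply: boolp.funext => x; apply: pair_ext; rewrite /vsub /=; ring.
  have [phiQ _] := phi_basis p pC.
  have := lam_def _ (Qh_scale_e1 k phiQ).
  by rewrite (pi_h_Q_basis _ _ pC (phi_basis p pC)) disc_pair_scale_e1 -/X; lra.
have pos_side := scaled_le0 _ (lexx (- (uh p).1)).
have neg_side : (uh p).1 * X <= 0 by apply: scaled_le0; lra.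
have /eqP : (uh p).1 * X = 0 by lra.
by rewrite mulf_eq0 (negbTE up0) => /eqP.
Qed.
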